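(* For every $k\ge1$, $\mathrm{ABD}(k\text{-CNF})\le^{\mathrm{CV}}\mathrm{ABD}((k+1)\text{-NAE})$ and $\mathrm{P\text{-}ABD}(k\text{-CNF})\le^{\mathrm{CV}}\mathrm{P\text{-}ABD}((k+1)\text{-NAE})$.
   Context: $k\text{-CNF}$ is the constraint language of all clauses of arity $k$. For a sign pattern $s=(s_1,\dots,s_k)\in\{0,1\}^k$, let $0_s=(a_1,\dots,a_k)$ be the unique tuple with $s_i\oplus a_i=0$ for all $i$ and $1_s$ the unique tuple with $s_i\oplus a_i=1$ for all $i$, and let $R^s_{\mathrm{NAE}}=\{0,1\}^k\setminus\{0_s,1_s\}$. $k\text{-NAE}$ is the set of all relations $R^s_{\mathrm{NAE}}$ of arity $k$. An instance of $\mathrm{ABD}(\Gamma)$ is $(\mathrm{KB},H,M)$, $\mathrm{KB}$ a $\Gamma$-formula, $H,M$ sets of variables; it asks whether there is $E\subseteq H\cup\{\neg x:x\in H\}$ with $\mathrm{KB}\wedge E$ satisfiable and $\mathrm{KB}\wedge E\models m$ for all $m\in M$; $\mathrm{P\text{-}ABD}(\Gamma)$ additionally requires $E\subseteq H$. A CV-reduction $A\le^{\mathrm{CV}}B$ is a polynomial-time map $f$ with $I\in A\iff f(I)\in B$ and $|\mathrm{var}(f(I))|\le|\mathrm{var}(I)|+O(1)$. *)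

From mathcomp Require Import all_boot.
Set Implicit Arguments. Unset Strict Implicit. Unset Printing Implicit Defensive.

(* Variables are natural numbers.  A constraint application is a pair  *)
(* (s, xs) of a sign pattern s and a tuple of variables xs (repetitions *)

Definition constr := (seq bool * seq nat)%type.

Record Instance := MkInstance {
  kb : seq constr;
  hyp : seq nat;
  manif : seq nat
}.

Definition wf_arity (n : nat) (I : Instance) : bool :=
  all (fun c => (size c.1 == n) && (size c.2 == n)) (kb I).

(* Clause of arity k with sign pattern s: excludes the single tuple 0_s,
   i.e. the tuple with a_i = s_i for all i. *)
Definition holds_clause (a : nat -> bool) (c : constr) : bool :=
  has (fun p => a p.2 != p.1) (zip c.1 c.2).

Definition holds_nae (a : nat -> bool) (c : constr) : bool :=
  has (fun p => a p.2 != p.1) (zip c.1 c.2) &&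
  has (fun p => a p.2 == p.1) (zip c.1 c.2).

Definition abd_sem (holds : (nat -> bool) -> constr -> bool) (pos : bool)
    (I : Instance) : Prop :=
  exists E : seq (nat * bool),
    all (fun l => (l.1 \in hyp I) && (pos ==> l.2)) E /\
    let models := fun a : nat -> bool =>
      all (holds a) (kb I) && all (fun l => a l.1 == l.2) E in
    (exists a, models a) /\
    (forall a, models a -> all a (manif I)).

Definition ABD_CNF (k : nat) (I : Instance) : Prop :=
  wf_arity k I /\ abd_sem holds_clause false I.
Definition PABD_CNF (k : nat) (I : Instance) : Prop :=
  wf_arity k I /\ abd_sem holds_clause true I.
Definition ABD_NAE (k : nat) (I : Instance) : Prop :=
  wf_arity k I /\ abd_sem holds_nae false I.
Definition PABD_NAE (k : nat) (I : Instance) : Prop :=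
  wf_arity k I /\ abd_sem holds_nae true I.

Definition vars (I : Instance) : seq nat :=
  undup (flatten (map snd (kb I)) ++ hyp I ++ manif I).
Definition nvars (I : Instance) : nat := size (vars I).

Inductive Sym := S0 | S1 | Sep | Open | Close.

Fixpoint binf (fuel n : nat) : seq bool :=
  match fuel with
  | 0 => [::]
  | f.+1 => if n == 0 then [::] else odd n :: binf f n./2
  end.
Definition bin (n : nat) : seq bool := binf n n.

Definition enc_bool (b : bool) : seq Sym := [:: if b then S1 else S0].
Definition enc_nat (n : nat) : seq Sym := map (fun b => if b then S1 else S0) (bin n).
Definition enc_list (T : Type) (e : T -> seq Sym) (xs : seq T) : seq Sym :=
  Open :: flatten [seq e x ++ [:: Sep] | x <- xs] ++ [:: Close].
Definition enc_constr (c : constr) : seq Sym :=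
  Open :: enc_list enc_bool c.1 ++ enc_list enc_nat c.2 ++ [:: Close].
Definition enc (I : Instance) : seq Sym :=
  enc_list enc_constr (kb I) ++ enc_list enc_nat (hyp I) ++ enc_list enc_nat (manif I).

(* States 'I_nq.+1 (start state ord0); tape symbols 'I_ns.+1, ord0 is   *)
(* the blank.  delta q a = None means halt; otherwise (q', a', right?). *)

Record TM := MkTM {
  nq : nat;
  ns : nat;
  delta : 'I_nq.+1 -> 'I_ns.+1 -> option ('I_nq.+1 * 'I_ns.+1 * bool)
}.

(* configuration: state, reversed left part, scanned cell, right part *)
Definition config (M : TM) :=
  ('I_(nq M).+1 * seq 'I_(ns M).+1 * 'I_(ns M).+1 * seq 'I_(ns M).+1)%type.

Definition step (M : TM) (c : config M) : option (config M) :=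
  let: (q, l, a, r) := c in
  match delta q a with
  | None => None
  | Some (q', a', true) =>
      Some (q', a' :: l, head ord0 r, behead r)
  | Some (q', a', false) =>
      Some (q', behead l, head ord0 l, a' :: r)
  end.

(* run for at most n steps; Some c iff the machine halts in c within n steps *)
Fixpoint run (M : TM) (n : nat) (c : config M) : option (config M) :=
  match @step M c with
  | None => Some c
  | Some c' => if n is n'.+1 then @run M n' c' else None
  end.

Definition sym_code (s : Sym) : nat :=
  match s with S0 => 1 | S1 => 2 | Sep => 3 | Open => 4 | Close => 5 end.

Definition to_tape (M : TM) (w : seq Sym) : seq 'I_(ns M).+1 :=
  map (fun s => inord (sym_code s)) w.

Definition init (M : TM) (w : seq Sym) : config M :=
  (ord0, [::], head ord0 (to_tape M w), behead (to_tape M w)).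

Definition output (M : TM) (c : config M) : seq 'I_(ns M).+1 :=
  let: (_, _, a, r) := c in
  take (find (fun x => x == ord0) (a :: r)) (a :: r).

Definition poly_time (f : Instance -> Instance) : Prop :=
  exists (M : TM) (d : nat),
    5 <= ns M /\
    forall I, exists cf,
      @run M ((size (enc I)) ^ d + d) (init M (enc I)) = Some cf /\
      @output M cf = to_tape M (enc (f I)).

Definition CV_reduction (A B : Instance -> Prop) : Prop :=
  exists f : Instance -> Instance,
    poly_time f /\
    (forall I, A I <-> B (f I)) /\
    (exists c : nat, forall I, nvars (f I) <= nvars I + c).

From mathcomp Require Import all_boot zify.
From Stdlib Require Import FunctionalExtensionality.
Set Implicit Arguments. Unset Strict Implicit. Unset Printing Implicit Defensive.

(* Rename every variable x to 2x+1, add a fresh variable 0 to H and to M, and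
   append 0 with sign 1 to every clause.  Since 0 is a manifestation, every model
   of KB' /\ E' sets 0 to 1, and then the extended NAE constraint holds exactly
   when the original clause does; so explanations correspond via E <-> E + {0},
   and only one variable is added.  On the binary encoding the map is computed by
   a finite-state transducer (2x+1 prepends a bit 1), and any finite-state
   transducer is simulated by a single-tape Turing machine in quadratic time. *)

(** * The reduction *)

Definition shift (x : nat) : nat := x.*2.+1.

Lemma shiftK : cancel shift half.
Proof. by move=> x; rewrite /shift -[x.*2.+1]/(true + x.*2) half_bit_double. Qed.

Definition nae_of_clause (c : constr) : constr :=
  (c.1 ++ [:: true], map shift c.2 ++ [:: 0]).

Definition cnf_to_nae (I : Instance) : Instance :=
  MkInstance (map nae_of_clause (kb I)) (0 :: map shift (hyp I)) (0 :: map shift (manif I)).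

Lemma wf_arity_cnf_to_nae k I : wf_arity k.+1 (cnf_to_nae I) = wf_arity k I.
Proof.
rewrite /wf_arity all_map; apply: eq_all => c /=.
by rewrite !size_cat !size_map !addn1 !eqSS.
Qed.

Lemma holds_nae_of_clause (a : nat -> bool) c : size c.1 = size c.2 -> a 0 ->
  holds_nae a (nae_of_clause c) = holds_clause (a \o shift) c.
Proof.
case: c => s xs /= hs ha; rewrite /holds_nae /holds_clause zip_cat ?size_map //.
rewrite !has_cat /= ha /= orbF orbT andbT.
by elim: s xs {hs} => [|b s IH] [|x xs] //=; rewrite IH.
Qed.

Lemma all_holds_cnf_to_nae k I (a : nat -> bool) : wf_arity k I -> a 0 ->
  all (holds_nae a) (kb (cnf_to_nae I)) = all (holds_clause (a \o shift)) (kb I).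
Proof.
move=> /allP hw ha; rewrite all_map; apply: eq_in_all => c /hw /andP [/eqP h1 /eqP h2].
by rewrite /= holds_nae_of_clause ?h1 ?h2.
Qed.

Definition extend (a : nat -> bool) (y : nat) : bool := if y == 0 then true else a y./2.

Lemma extend_shift a : extend a \o shift = a.
Proof. by apply: functional_extensionality => x; rewrite /= /extend shiftK. Qed.

Definition agrees (a : nat -> bool) (E : seq (nat * bool)) : bool :=
  all (fun l => a l.1 == l.2) E.

Definition shift_lit (l : nat * bool) : nat * bool := (shift l.1, l.2).
Definition unshift_lit (l : nat * bool) : nat * bool := (l.1./2, l.2).

Lemma agrees_shift a E : agrees a (map shift_lit E) = agrees (a \o shift) E.
Proof. by rewrite /agrees all_map. Qed.

Section SemEquiv.
Variables (k : nat) (pos : bool) (I : Instance).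
Hypothesis wfI : wf_arity k I.

Lemma abd_sem_cnf_to_nae :
  abd_sem holds_clause pos I -> abd_sem holds_nae pos (cnf_to_nae I).
Proof.
case=> E [hE [[a0 /andP [ha0 hEa0]] hent]].
exists ((0, true) :: map shift_lit E); split; [|split].
- rewrite /= implybT all_map; apply: sub_all hE => l /andP [hl hpos].
  by rewrite /= hpos andbT inE map_f ?orbT.
- exists (extend a0); rewrite (all_holds_cnf_to_nae wfI) // extend_shift ha0 /=.
  by rewrite -/(agrees _ _) agrees_shift extend_shift.
- move=> a /andP [hk]; rewrite /= => /andP [/eqP ha hEa].
  rewrite (all_holds_cnf_to_nae wfI) // in hk.
  rewrite -/(agrees _ _) agrees_shift in hEa.
  by rewrite ha all_map; apply: hent; rewrite hk.
Qed.

Lemma cnf_to_nae_abd_sem :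
  abd_sem holds_nae pos (cnf_to_nae I) -> abd_sem holds_clause pos I.
Proof.
case=> E [hE [[a0 /andP [ha0 hEa0]] hent]].
have a00 : a0 0 by have /andP [] := hent a0 (introT andP (conj ha0 hEa0)).
have unshiftK l : l \in E -> l.1 != 0 -> shift_lit (unshift_lit l) = l.
  case: l => y b /(allP hE) /andP [+ _] /= hn; rewrite inE (negbTE hn).
  by case/mapP => x _; rewrite /unshift_lit /shift_lit /= => ->; rewrite shiftK.
have shift_unshift :
    map shift_lit [seq unshift_lit l | l <- E & l.1 != 0] = [seq l <- E | l.1 != 0].
  rewrite -map_comp map_id_in // => l; rewrite mem_filter => /andP [hn hl].
  exact: unshiftK.
exists [seq unshift_lit l | l <- E & l.1 != 0]; split; [|split].
- rewrite all_map; apply/allP => l; rewrite mem_filter => /andP [hn hl] /=.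
  case/andP: (allP hE l hl); rewrite inE (negbTE hn) => /mapP [x hx ->] ->.
  by rewrite shiftK hx.
- exists (a0 \o shift); rewrite -(all_holds_cnf_to_nae wfI) // ha0.
  rewrite -/(agrees _ _) -agrees_shift shift_unshift /agrees all_filter.
  by apply: sub_all hEa0 => l hl; rewrite /= hl implybT.
- move=> a /andP [hk hEa].
  have hEe : agrees (extend a) E.
    have hnz : agrees (extend a) [seq l <- E | l.1 != 0].
      by rewrite -shift_unshift agrees_shift extend_shift.
    apply/allP => l hl; case: (l.1 =P 0) => [h0|/eqP hn].
    + by rewrite /extend h0 -(eqP (allP hEa0 l hl)) h0 a00.
    + by apply: (allP hnz); rewrite mem_filter hn.
  have := hent (extend a); rewrite (all_holds_cnf_to_nae wfI) //.
  rewrite extend_shift hk -/(agrees _ _) hEe => /(_ isT).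
  by rewrite /= all_map; apply: sub_all => x; rewrite /= /extend shiftK.
Qed.

End SemEquiv.

Lemma vars_cnf_to_nae I : {subset vars (cnf_to_nae I) <= 0 :: map shift (vars I)}.
Proof.
have sub s : {subset s <= vars I} -> {subset 0 :: map shift s <= 0 :: map shift (vars I)}.
  move=> hs y; rewrite !inE => /orP [->//|/mapP [x /hs hx ->]].
  by rewrite map_f ?orbT.
move=> y; rewrite /vars mem_undup !mem_cat => /or3P [|hy|hy].
- case/flattenP => _ /mapP [c' /mapP [c hc ->] ->].
  rewrite /= mem_cat orbC inE => /orP [/eqP ->|hy]; first by rewrite inE eqxx.
  apply: (sub c.2) => //; last by rewrite inE hy orbT.
  move=> x hx; rewrite mem_undup mem_cat; apply/orP; left.
  by apply/flattenP; exists c.2; rewrite ?map_f.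
- by apply: sub hy => x hx; rewrite mem_undup !mem_cat hx orbT.
- by apply: sub hy => x hx; rewrite mem_undup !mem_cat hx !orbT.
Qed.

Lemma nvars_cnf_to_nae I : nvars (cnf_to_nae I) <= nvars I + 1.
Proof.
rewrite /nvars addn1 -(size_map shift (vars I)) -[_.+1]/(size (0 :: _)).
apply: uniq_leq_size; [exact: undup_uniq | exact: vars_cnf_to_nae].
Qed.

(** * Transducers *)

Section Transducer.
Variables (Q : Type) (next : Q -> Sym -> Q) (out : Q -> Sym -> seq Sym).

Fixpoint transduce (q : Q) (w : seq Sym) : Q * seq Sym :=
  if w is s :: w' then let: (q', o) := transduce (next q s) w' in (q', out q s ++ o)
  else (q, [::]).

Lemma transduce_cat q w1 w2 : transduce q (w1 ++ w2) =
  let: (q1, o1) := transduce q w1 in let: (q2, o2) := transduce q1 w2 in (q2, o1 ++ o2).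
Proof.
elim: w1 q => [|s w1 IH] q /=; first by case: transduce.
rewrite IH; case: (transduce (next q s) w1) => q1 o1; case: transduce => q2 o2.
by rewrite catA.
Qed.

End Transducer.

(* Since [shift x = 2x+1],
   the little-endian binary of [shift x] is that of [x] preceded by a 1, and the
   fresh variable 0 is written as the empty word.  States 5/6, 9/10 and 12/13 rewrite
   the variable lists of a clause, of H and of M; 3 appends the sign [true] and 7 the
   variable 0 to a clause; 8 and 11 prepend 0 to H and M. *)
Definition enc_step (q : nat) (s : Sym) : nat * seq Sym :=
  match q, s with
  | 0, Open => (1, [:: Open])
  | 1, Open => (2, [:: Open])
  | 1, Sep => (1, [:: Sep])
  | 1, Close => (8, [:: Close])
  | 2, Open => (3, [:: Open])
  | 3, Close => (4, [:: S1; Sep; Close])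
  | 3, _ => (3, [:: s])
  | 4, Open => (5, [:: Open])
  | 5, Close => (7, [:: Sep; Close])
  | 5, Sep => (5, [:: S1; Sep])
  | 5, _ => (6, [:: S1; s])
  | 6, Sep => (5, [:: Sep])
  | 6, _ => (6, [:: s])
  | 7, Close => (1, [:: Close])
  | 8, Open => (9, [:: Open; Sep])
  | 9, Close => (11, [:: Close])
  | 9, Sep => (9, [:: S1; Sep])
  | 9, _ => (10, [:: S1; s])
  | 10, Sep => (9, [:: Sep])
  | 10, _ => (10, [:: s])
  | 11, Open => (12, [:: Open; Sep])
  | 12, Close => (14, [:: Close])
  | 12, Sep => (12, [:: S1; Sep])
  | 12, _ => (13, [:: S1; s])
  | 13, Sep => (12, [:: Sep])
  | 13, _ => (13, [:: s])
  | _, _ => (15, [::])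
  end.

Notation enc_transduce := (transduce (fun q s => (enc_step q s).1) (fun q s => (enc_step q s).2)).

Lemma enc_step_lt q s : (enc_step q s).1 < 16.
Proof. by do 16 (case: q => [|q]; first by case: s); case: s. Qed.

Lemma size_enc_step q s : size (enc_step q s).2 <= 3.
Proof. by do 16 (case: q => [|q]; first by case: s); case: s. Qed.

Lemma binf_eq f1 f2 n : n <= f1 -> n <= f2 -> binf f1 n = binf f2 n.
Proof.
elim: f1 f2 n => [|f1 IH] [|f2] n //= h1 h2; try by have -> : n = 0 by lia.
by case: eqP => // hn; rewrite (IH f2) //; lia.
Qed.

Lemma enc_nat_shift x : enc_nat (shift x) = S1 :: enc_nat x.
Proof.
rewrite /enc_nat /bin /shift /= odd_double uphalf_double /=.
by rewrite (@binf_eq _ x) //; lia.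
Qed.

Definition enc_digit (b : bool) : Sym := if b then S1 else S0.

Lemma transduce_digits q bs : q \in [:: 6; 10; 13] ->
  enc_transduce q (map enc_digit bs) = (q, map enc_digit bs).
Proof. by rewrite !inE => /or3P [] /eqP ->; elim: bs => [|[] bs IH] //=; rewrite IH. Qed.

Lemma transduce_var q x : q \in [:: 5; 9; 12] ->
  enc_transduce q (enc_nat x ++ [:: Sep]) = (q, enc_nat (shift x) ++ [:: Sep]).
Proof.
rewrite enc_nat_shift /enc_nat -/enc_digit; case: (bin x) => [|b bs].
  by rewrite !inE => /or3P [] /eqP ->.
have loop q' : q' \in [:: 6; 10; 13] ->
    enc_transduce q' (map enc_digit bs ++ [:: Sep]) = (q'.-1, map enc_digit bs ++ [:: Sep]).
  move=> hq'; rewrite transduce_cat transduce_digits //.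
  by move: hq'; rewrite !inE => /or3P [] /eqP ->.
rewrite !inE => /or3P [] /eqP -> /=;
  by case: b; rewrite /= loop.
Qed.

Lemma transduce_vars q xs : q \in [:: 5; 9; 12] ->
  enc_transduce q (flatten [seq enc_nat x ++ [:: Sep] | x <- xs]) =
  (q, flatten [seq enc_nat x ++ [:: Sep] | x <- map shift xs]).
Proof. by move=> hq; elim: xs => [|x xs IH] //=; rewrite transduce_cat transduce_var // IH. Qed.

Lemma transduce_signs bs : enc_transduce 3 (flatten [seq enc_bool b ++ [:: Sep] | b <- bs]) =
  (3, flatten [seq enc_bool b ++ [:: Sep] | b <- bs]).
Proof. by elim: bs => [|[] bs IH] //=; rewrite IH. Qed.

Lemma transduce_clause c : enc_transduce 1 (enc_constr c ++ [:: Sep]) =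
  (1, enc_constr (nae_of_clause c) ++ [:: Sep]).
Proof.
case: c => s xs; rewrite /enc_constr /enc_list /=.
rewrite -!catA transduce_cat transduce_signs /= -!catA transduce_cat transduce_vars //=.
by rewrite !map_cat !flatten_cat /= -!catA.
Qed.

Lemma transduce_clauses cs : enc_transduce 1 (flatten [seq enc_constr c ++ [:: Sep] | c <- cs]) =
  (1, flatten [seq enc_constr c ++ [:: Sep] | c <- map nae_of_clause cs]).
Proof.
elim: cs => [|c cs IH] //; rewrite !map_cons.
by rewrite -2![flatten (_ :: _)]/(_ ++ _) transduce_cat transduce_clause IH.
Qed.

Lemma transduce_enc I : enc_transduce 0 (enc I) = (14, enc (cnf_to_nae I)).
Proof.
case: I => K H Mf; rewrite /enc /enc_list /cnf_to_nae /=.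
rewrite -!catA transduce_cat transduce_clauses /= -?catA transduce_cat transduce_vars //=.
by rewrite -?catA transduce_cat transduce_vars.
Qed.

(** * Simulating a transducer on a Turing machine *)

Definition code (s : Sym) : 'I_8 := inord (sym_code s).

Definition decode (a : 'I_8) : Sym :=
  match nat_of_ord a with 1 => S0 | 2 => S1 | 3 => Sep | 4 => Open | _ => Close end.

Definition blank : 'I_8 := ord0.
Definition mark : 'I_8 := inord 6.
Definition endmark : 'I_8 := inord 7.

Definition is_data (a : 'I_8) : bool := (a != blank) && (a != mark).

Lemma code_val s : nat_of_ord (code s) = sym_code s.
Proof. by rewrite /code inordK //; case: s. Qed.

Lemma codeK : cancel code decode.
Proof. by move=> s; rewrite /decode code_val; case: s. Qed.

Lemma code_data s : is_data (code s).
Proof. by rewrite /is_data -!(inj_eq val_inj) /= code_val inordK //; case: s. Qed.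

Lemma all_data_codes w : all is_data (map code w).
Proof. by elim: w => //= s w ->; rewrite code_data. Qed.

Lemma code_neq_endmark s : code s != endmark.
Proof. by rewrite -(inj_eq val_inj) /= code_val inordK //; case: s. Qed.

Lemma endmark_data : is_data endmark.
Proof. by rewrite /is_data -!(inj_eq val_inj) /= !inordK. Qed.

Lemma mark_not_data : ~~ is_data mark.
Proof. by rewrite /is_data eqxx andbF. Qed.

Section TransducerMachine.
Variables (Q : finType) (q0 : Q) (next : Q -> Sym -> Q) (out : Q -> Sym -> seq Sym) (B : nat).
Hypothesis size_out : forall q s, size (out q s) <= B.

(* The machine first appends [endmark] to the input, then repeatedly overwrites the
   leftmost unread input cell with [mark] (Fetch), carries the read symbol to the
   right end of the tape and appends the corresponding output there (Carry), and
   walks back to the last [mark] (Back). *)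
Definition phase_body := (((Q + Q) + (Q * 'I_8 * 'I_B.+1)) + unit)%type.
Definition phase := option phase_body.
Definition Scan : phase := None.
Definition Back (q : Q) : phase := Some (inl (inl (inl q))).
Definition Fetch (q : Q) : phase := Some (inl (inl (inr q))).
Definition Carry (q : Q) (a : 'I_8) (i : 'I_B.+1) : phase := Some (inl (inr (q, a, i))).
Definition Halt : phase := Some (inr tt).

Definition out_code (q : Q) (a : 'I_8) : seq 'I_8 := map code (out q (decode a)).

Definition trans (p : phase) (c : 'I_8) : option (phase * 'I_8 * bool) :=
  match p with
  | None => if c == blank then Some (Back q0, endmark, false) else Some (Scan, c, true)
  | Some (inl (inl (inl q))) =>
      if is_data c then Some (Back q, c, false) else Some (Fetch q, c, true)
  | Some (inl (inl (inr q))) =>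
      if c == endmark then Some (Halt, c, true) else Some (Carry q c ord0, mark, true)
  | Some (inl (inr (q, a, i))) =>
      if c != blank then Some (Carry q a i, c, true)
      else if i < size (out_code q a) then
        Some (Carry q a (inord i.+1), nth blank (out_code q a) i, true)
      else Some (Back (next q (decode a)), blank, false)
  | Some (inr _) => None
  end.

Definition nphase := #|{: phase_body}|.

Definition encode_phase (p : phase) : 'I_nphase.+1 :=
  if p is Some x then lift ord0 (enum_rank x) else ord0.

Definition decode_phase (i : 'I_nphase.+1) : phase := omap enum_val (unlift ord0 i).

Lemma encode_phaseK : cancel encode_phase decode_phase.
Proof.
case=> [x|]; rewrite /decode_phase /encode_phase ?unlift_none //.
by rewrite liftK /= enum_rankK.
Qed.

Definition machine : TM :=
  @MkTM nphase 7 (fun i c =>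
    omap (fun t => (encode_phase t.1.1, t.1.2, t.2)) (trans (decode_phase i) c)).

Definition mk (p : phase) (l r : seq 'I_8) : config machine :=
  (encode_phase p, l, head blank r, behead r).

Lemma trans_Scan c : c != blank -> trans Scan c = Some (Scan, c, true).
Proof. by move=> /negbTE /= ->. Qed.

Lemma trans_Back q c : is_data c -> trans (Back q) c = Some (Back q, c, false).
Proof. by move=> /= ->. Qed.

Lemma trans_Back_stop q c : ~~ is_data c -> trans (Back q) c = Some (Fetch q, c, true).
Proof. by move=> /negbTE /= ->. Qed.

Lemma trans_Fetch q s : trans (Fetch q) (code s) = Some (Carry q (code s) ord0, mark, true).
Proof. by rewrite /= (negbTE (code_neq_endmark s)). Qed.

Lemma trans_Fetch_endmark q : trans (Fetch q) endmark = Some (Halt, endmark, true).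
Proof. by rewrite /= eqxx. Qed.

Lemma trans_Carry q a i c : c != blank -> trans (Carry q a i) c = Some (Carry q a i, c, true).
Proof. by move=> /= ->. Qed.

Lemma trans_Carry_write q a (i : 'I_B.+1) : i < size (out_code q a) ->
  trans (Carry q a i) blank = Some (Carry q a (inord i.+1), nth blank (out_code q a) i, true).
Proof. by move=> /= ->. Qed.

Lemma trans_Carry_done q a (i : 'I_B.+1) : size (out_code q a) <= i ->
  trans (Carry q a i) blank = Some (Back (next q (decode a)), blank, false).
Proof. by rewrite /= leqNgt => /negbTE ->. Qed.

Fixpoint steps (n : nat) (c : config machine) : option (config machine) :=
  if n is n'.+1 then (if step c is Some c' then steps n' c' else None) else Some c.

Lemma steps_right n p c l r p' c' : trans p c = Some (p', c', true) ->
  steps n.+1 (mk p l (c :: r)) = steps n (mk p' (c' :: l) r).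
Proof. by move=> h; rewrite /= /step /mk /= encode_phaseK h. Qed.

Lemma steps_left n p c l r p' c' : trans p c = Some (p', c', false) ->
  steps n.+1 (mk p l (c :: r)) = steps n (mk p' (behead l) (head blank l :: c' :: r)).
Proof. by move=> h; rewrite /= /step /mk /= encode_phaseK h. Qed.

Lemma output_mk p l r : output (mk p l r) = take (find (fun x => x == blank) r) r.
Proof. by case: r. Qed.

Lemma step_Halt l r : step (mk Halt l r) = None.
Proof. by rewrite /step /mk /= -[lift _ _]/(encode_phase Halt) encode_phaseK. Qed.

Lemma steps_add n m c c1 :
  steps n c = Some c1 -> steps (n + m) c = steps m c1.
Proof. by elim: n c => [|n IH] c /=; [case=> -> | case: step => // c' /IH]. Qed.

Lemma run_steps n m c c' : steps n c = Some c' -> run (n + m) c = run m c'.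
Proof.
elim: n c => [|n IH] c /=; first by case=> ->.
by case: step => // c'' /IH.
Qed.

Lemma run_halted m (c : config machine) : step c = None -> run m c = Some c.
Proof. by case: m => [|m] /= ->. Qed.

Lemma scan_right p s L R : {in s, forall y, trans p y = Some (p, y, true)} ->
  steps (size s) (mk p L (s ++ R)) = Some (mk p (rev s ++ L) R).
Proof.
elim: s L => [|y s IH] L hs //.
rewrite cat_cons (steps_right _ _ _ (hs y (mem_head _ _))) IH ?rev_cons ?cat_rcons //.
by move=> z hz; apply: hs; rewrite inE hz orbT.
Qed.

Lemma back_run q T L R : all is_data T -> ~~ is_data (head blank L) ->
  steps (size T).+1 (mk (Back q) (behead (rev T ++ L)) (head blank (rev T ++ L) :: R)) =
  Some (mk (Fetch q) (head blank L :: behead L) (T ++ R)).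
Proof.
move=> + hL; elim/last_ind: T R => [|T c IH] R.
  by move=> _; rewrite (steps_right _ _ _ (trans_Back_stop _ hL)).
rewrite all_rcons => /andP [hc hT].
by rewrite size_rcons rev_rcons (steps_left _ _ _ (trans_Back _ hc)) IH // cat_rcons.
Qed.

Section Carry.
Variables (q : Q) (a : 'I_8).
Let W := out_code q a.

Lemma write_run i L : i <= size W ->
  steps (size W - i).+1 (mk (Carry q a (inord i)) L [::]) =
  Some (mk (Back (next q (decode a))) (behead (rev (drop i W) ++ L))
           (head blank (rev (drop i W) ++ L) :: [:: blank])).
Proof.
have hWB : size W <= B by rewrite size_map size_out.
move hn : (size W - i) => n; elim: n i L hn => [|n IH] i L hn hi.
  have -> : i = size W by lia.
  rewrite drop_size (steps_left _ _ _ (trans_Carry_done _)) //.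
  by rewrite inordK //; lia.
have hiW : i < size W by lia.
have hi' : (inord i : 'I_B.+1) < size W by rewrite inordK //; lia.
rewrite (steps_right _ _ _ (trans_Carry_write hi')) inordK; last by lia.
by rewrite IH ?(drop_nth blank hiW) ?rev_cons ?cat_rcons //; lia.
Qed.

Lemma carry_run T L : all is_data T -> ~~ is_data (head blank L) ->
  steps (size T + (size W).*2).+2 (mk (Carry q a ord0) (rev T ++ L) [::]) =
  Some (mk (Fetch (next q (decode a))) (head blank L :: behead L) (T ++ W ++ [:: blank])).
Proof.
move=> hT hL; have -> : (size T + (size W).*2).+2 = (size W - 0).+1 + (size (T ++ W)).+1.
  by rewrite size_cat; lia.
have -> : (ord0 : 'I_B.+1) = inord 0 by apply: val_inj; rewrite /= inordK.
rewrite (steps_add _ (write_run _ _)) // drop0 catA -rev_cat back_run // -?catA //.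
by rewrite all_cat hT all_data_codes.
Qed.

End Carry.

Lemma output_codes p l w pad : pad = [::] \/ pad = [:: blank] ->
  output (mk p l (map code w ++ pad)) = map code w.
Proof.
move=> hpad; rewrite output_mk find_cat.
have -> : has (fun x => x == blank) (map code w) = false.
  by apply/negbTE/hasPn => x /(allP (all_data_codes w)) /andP [].
by case: hpad => ->; rewrite addn0 take_size_cat.
Qed.

(* [pad] records whether the blank cell right of the output is materialised in
   the tape list; this does not affect the output. *)
Lemma fetch_loop w q o j pad : pad = [::] \/ pad = [:: blank] ->
  exists2 N, N <= size w * (B.+1 * size w + (size o).*2 + B + 5) + 1 &
  exists2 cf,
    steps N (mk (Fetch q) (nseq j mark ++ [:: blank]) (map code w ++ endmark :: map code o ++ pad))
      = Some cf &
    step cf = None /\ output cf = map code (o ++ (transduce next out q w).2).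
Proof.
elim: w q o j pad => [|s w IH] q o j pad hpad.
  exists 1 => //; exists (mk Halt (endmark :: nseq j mark ++ [:: blank]) (map code o ++ pad)).
    by rewrite (steps_right _ _ _ (trans_Fetch_endmark q)).
  by rewrite step_Halt cats0 output_codes.
set T := map code w ++ endmark :: map code o.
have hT : all is_data T by rewrite all_cat all_data_codes /= endmark_data all_data_codes.
have hW : size (out_code q (code s)) = size (out q s) by rewrite size_map codeK.
have [N hN [cf hcf [hstop hend]]] := IH (next q s) (o ++ out q s) j.+1 [:: blank] (or_intror erefl).
exists (size T + (size T + (size (out_code q (code s))).*2).+2 + N).+1.
  have hsT : size T = size w + (size o).+1 by rewrite size_cat size_map /= size_map.
  have hB := size_out q s; rewrite size_cat in hN.
  rewrite hsT hW /=; nia.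
exists cf; last by rewrite hstop hend /=; case: transduce => q' o'; rewrite catA.
rewrite map_cons cat_cons (steps_right _ _ _ (trans_Fetch q s)) -addnA.
have -> : map code w ++ endmark :: map code o ++ pad = T ++ pad by rewrite /T -catA.
rewrite (steps_add _ (scan_right _ _ _)); last first.
  by move=> y hy; apply: trans_Carry; have /andP [] := allP hT y hy.
have -> : mk (Carry q (code s) ord0) (rev T ++ mark :: nseq j mark ++ [:: blank]) pad =
          mk (Carry q (code s) ord0) (rev T ++ mark :: nseq j mark ++ [:: blank]) [::].
  by case: hpad => ->.
rewrite (steps_add _ (carry_run (L := mark :: _) _ _ hT mark_not_data)) codeK -hcf.
by rewrite /T /out_code codeK map_cat -!catA.
Qed.

Lemma scan_run w : steps (size w).*2.+2 (mk Scan [::] (map code w)) =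
  Some (mk (Fetch q0) [:: blank] (map code w ++ [:: endmark])).
Proof.
have -> : (size w).*2.+2 = size (map code w) + (size (map code w)).+2.
  by rewrite size_map; lia.
rewrite -[in mk _ _ _](cats0 (map code w)) (steps_add _ (scan_right _ _ _)); last first.
  by move=> y /(allP (all_data_codes w)) /andP [hy _]; apply: trans_Scan.
have -> : mk Scan (rev (map code w) ++ [::]) [::] = mk Scan (rev (map code w) ++ [::]) [:: blank].
  by [].
have hScan : trans Scan blank = Some (Back q0, endmark, false) by [].
by rewrite (steps_left _ _ _ hScan) back_run ?all_data_codes.
Qed.

Lemma machine_run w :
  exists2 N, N <= (B.*2 + 8) * (size w) ^ 2 + (B.*2 + 8) &
  exists2 cf, steps N (init machine w) = Some cf &
    step cf = None /\ output cf = map code (transduce next out q0 w).2.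
Proof.
have [N hN [cf hcf hend]] := fetch_loop w q0 [::] 0 (or_introl erefl).
exists ((size w).*2.+2 + N); last exists cf => //.
  by move: hN => /=; rewrite expnS expn1; nia.
have -> : init machine w = mk Scan [::] (map code w) by [].
by rewrite (steps_add _ (scan_run w)) -hcf.
Qed.

End TransducerMachine.

Lemma quadratic_le_poly c n : c * n ^ 2 + c <= n ^ c.*2.+2 + c.*2.+2.
Proof.
case: (leqP n 1) => hn.
  have : n ^ 2 <= 1 by rewrite (leq_trans _ (leq_pexp2l _ hn)) //; case: n hn => [|[]].
  by nia.
have hcX : c <= n ^ c.*2.
  by apply: leq_trans (ltnW (ltn_expl _ hn)); rewrite -addnn leq_addr.
rewrite -(addn2 c.*2) expnD.
by have := leq_mul hcX (leqnn (n ^ 2)); lia.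
Qed.

Theorem transducer_poly_time (Q : finType) (q0 : Q) next out B (f : Instance -> Instance) :
  (forall q s, size (out q s) <= B) ->
  (forall I, (transduce next out q0 (enc I)).2 = enc (f I)) -> poly_time f.
Proof.
move=> hB hf; exists (machine q0 next out B), (B.*2 + 8).*2.+2; split=> // I.
have [N hN [cf hcf [hstop hout]]] := machine_run q0 next hB (enc I).
exists cf; split; last by rewrite hout hf.
rewrite -(subnKC (leq_trans hN (quadratic_le_poly _ _))) (run_steps _ hcf).
exact: run_halted.
Qed.

Lemma transduce_inord n (next : nat -> Sym -> nat) (out : nat -> Sym -> seq Sym) q w :
  (forall q s, next q s < n.+1) -> q < n.+1 ->
  transduce (fun (q : 'I_n.+1) s => inord (next q s)) (fun (q : 'I_n.+1) s => out q s)
            (inord q) w =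
  (inord (transduce next out q w).1, (transduce next out q w).2).
Proof.
move=> hnext; elim: w q => [|s w IH] q hq //=.
by rewrite inordK // IH //; case: transduce.
Qed.

Lemma cnf_to_nae_poly_time : poly_time cnf_to_nae.
Proof.
apply: (@transducer_poly_time _ ord0 (fun (q : 'I_16) s => inord (enc_step q s).1)
          (fun (q : 'I_16) s => (enc_step q s).2) 3) => [q s|I].
  exact: size_enc_step.
have -> : (ord0 : 'I_16) = inord 0 by apply: val_inj; rewrite /= inordK.
rewrite (@transduce_inord 15 (fun q s => (enc_step q s).1) (fun q s => (enc_step q s).2)) //.
  by rewrite transduce_enc.
exact: enc_step_lt.
Qed.

Lemma abd_cnf_to_nae pos k I :
  wf_arity k I /\ abd_sem holds_clause pos I <->
  wf_arity k.+1 (cnf_to_nae I) /\ abd_sem holds_nae pos (cnf_to_nae I).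
Proof.
rewrite wf_arity_cnf_to_nae; split=> -[hw h]; split=> //.
  exact: abd_sem_cnf_to_nae hw h.
exact: cnf_to_nae_abd_sem hw h.
Qed.

Unset Implicit Arguments.

Theorem theorem29 (k : nat) (hk : 1 <= k) :
  CV_reduction (ABD_CNF k) (ABD_NAE k.+1) /\
  CV_reduction (PABD_CNF k) (PABD_NAE k.+1).
Proof.
have cv pos : CV_reduction (fun I => wf_arity k I /\ abd_sem holds_clause pos I)
                           (fun I => wf_arity k.+1 I /\ abd_sem holds_nae pos I).
  exists cnf_to_nae; split; first exact: cnf_to_nae_poly_time.
  split=> [I|]; first exact: abd_cnf_to_nae.
  by exists 1; exact: nvars_cnf_to_nae.
exact: (conj (cv false) (cv true)).
Qed.
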